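(* Let $C'>1$ and $c_\beta>1$, and suppose $F: (0,\infty) \to [0,\infty)$ satisfies $$F(t) \leq C' \frac{F(t-c_\beta s)}{s}$$ for all $t,s$ with $c_\beta^{-1} t \geq s \geq 1$. If $F(t) \leq 1/t$ for every $t>0$, then there exist constants $c,C>0$ such that $F(t) \leq C \exp(-c t)$ for every $t\geq c_\beta$. *)

From Stdlib Require Import Reals.

(* Taking s := 2 C' in the recursion gives F t <= F (t - L) / 2 with L := 2 C' c_beta,
   as soon as t > L.  Together with F t <= 1 / t <= 1 / c_beta on the first window
   [c_beta, c_beta + L), halving every L units of time is exponential decay at rate
   ln 2 / L. *)
From Stdlib Require Import Reals Lra.
Open Scope R_scope.

Lemma exp_decay_of_contraction (G : R -> R) (a L c M : R) :
  0 < L -> 0 <= c -> 0 <= M ->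
  (forall t, a <= t < a + L -> G t <= M) ->
  (forall t, a + L <= t -> G t <= exp (- (c * L)) * G (t - L)) ->
  forall t, a <= t -> G t <= M * exp (c * L) * exp (- (c * (t - a))).
Proof.
  intros hL hc hM hbase hstep.
  assert (window : forall (n : nat) t, a <= t < a + INR n * L ->
            G t <= M * exp (c * L) * exp (- (c * (t - a)))).
  { induction n as [|n IH]; intros t ht.
    - simpl in ht. lra.
    - rewrite S_INR in ht.
      destruct (Rlt_or_le t (a + L)) as [hfirst|hlater].
      + assert (hgrowth : 1 <= exp (c * L) * exp (- (c * (t - a)))).
        { rewrite <- exp_plus. pose proof (exp_ineq1_le (c * L + - (c * (t - a)))).
          nra. }
        pose proof (hbase t (conj (proj1 ht) hfirst)). nra.
      + assert (hshift : exp (- (c * L)) * exp (- (c * (t - L - a)))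
                         = exp (- (c * (t - a)))).
        { rewrite <- exp_plus. f_equal. ring. }
        rewrite <- hshift.
        pose proof (IH (t - L) ltac:(lra)) as hprev.
        pose proof (exp_pos (- (c * L))).
        eapply Rle_trans; [apply hstep; exact hlater|]. nra. }
  intros t ht.
  destruct (INR_unbounded ((t - a) / L)) as [n hn].
  apply (window n). split; [exact ht|].
  apply Rmult_lt_compat_r with (r := L) in hn; [|exact hL].
  unfold Rdiv in hn. rewrite Rmult_assoc, Rinv_l in hn by lra. lra.
Qed.

Section Recursion.

Variables (C' cb : R) (F : R -> R).
Hypothesis hC' : 1 < C'.
Hypothesis hcb : 1 < cb.
Hypothesis hrec : forall t s, 0 < t -> 1 <= s -> s <= t / cb -> 0 < t - cb * s ->
  F t <= C' * F (t - cb * s) / s.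

Lemma recursion_halves (t : R) :
  cb * (2 * C') < t -> F t <= / 2 * F (t - cb * (2 * C')).
Proof.
  intros ht.
  assert (hL : 0 < cb * (2 * C')) by nra.
  assert (hs : 2 * C' <= t / cb).
  { apply Rmult_le_reg_r with cb; [lra|].
    replace (t / cb * cb) with t by (field; lra). lra. }
  replace (/ 2 * F (t - cb * (2 * C'))) with (C' * F (t - cb * (2 * C')) / (2 * C'))
    by (field; lra).
  apply hrec; lra.
Qed.

End Recursion.

Theorem lemma4p1 (C' cb : R) (F : R -> R)
  (hC' : 1 < C') (hcb : 1 < cb)
  (hFnn : forall t, 0 < t -> 0 <= F t)
  (hrec : forall t s, 0 < t -> 1 <= s -> s <= t / cb -> 0 < t - cb * s ->
            F t <= C' * F (t - cb * s) / s)
  (hdecay : forall t, 0 < t -> F t <= 1 / t) :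
  exists c C : R, 0 < c /\ 0 < C /\
    forall t, cb <= t -> F t <= C * exp (- (c * t)).
Proof.
  set (L := cb * (2 * C')).
  set (c := ln 2 / L).
  assert (hL : 0 < L) by (unfold L; nra).
  assert (hc : 0 < c) by (unfold c; pose proof ln_lt_2; apply Rdiv_lt_0_compat; lra).
  assert (halving : exp (- (c * L)) = / 2).
  { unfold c. replace (ln 2 / L * L) with (ln 2) by (field; lra).
    rewrite exp_Ropp, exp_ln; lra. }
  assert (first_window : forall t, cb <= t < cb + L -> F t <= / cb).
  { intros t ht. eapply Rle_trans; [apply hdecay; lra|].
    unfold Rdiv. rewrite Rmult_1_l. apply Rinv_le_contravar; lra. }
  exists c, (/ cb * exp (c * L) * exp (c * cb)).
  split; [exact hc|]. split.
  { pose proof (exp_pos (c * L)). pose proof (exp_pos (c * cb)).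
    pose proof (Rinv_0_lt_compat cb ltac:(lra)).
    apply Rmult_lt_0_compat; [apply Rmult_lt_0_compat|]; assumption. }
  intros t ht.
  assert (hshift : exp (c * cb) * exp (- (c * t)) = exp (- (c * (t - cb))))
    by (rewrite <- exp_plus; f_equal; ring).
  rewrite Rmult_assoc, hshift.
  apply (exp_decay_of_contraction F cb L c (/ cb)); try lra.
  - left. apply Rinv_0_lt_compat. lra.
  - exact first_window.
  - intros s hs. rewrite halving.
    apply (recursion_halves C' cb F hC' hcb hrec). unfold L in *. lra.
Qed.
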